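(* Consider the following perfect-information game between Learner, Reality and $N$ experts (Expert $1,\dots,$ Expert $N$). At each step $t=1,2,\dots$: each Expert $n$ ($n=1,\dots,N$) announces a prediction $\gamma_t^n\in[0,1]$, a number $\eta_t^n>0$, and a loss function $\lambda_t^n\in\mathcal{L}$ that is $\eta_t^n$-mixable; then Learner announces a prediction $\pi_t\in[0,1]$; then Reality announces an outcome $\omega_t\in\{0,1\}$. Learner has a strategy that guarantees that, for all $T\ge 1$ and all $n=1,\dots,N$, $$\sum_{t=1}^T \eta_t^n\bigl(\lambda_t^n(\pi_t,\omega_t)-\lambda_t^n(\gamma_t^n,\omega_t)\bigr)\le \ln N .$$
   Context: A loss function is a map $\lambda:[0,1]\times\{0,1\}\to[0,\infty]$ satisfying: (1) $\lambda(\gamma,0)$ and $\lambda(\gamma,1)$ are continuous in $\gamma\in[0,1]$ (with the standard topology on $[0,\infty]$); (2) there exists $\gamma\in[0,1]$ with $\lambda(\gamma,0)$ and $\lambda(\gamma,1)$ both finite; (3) there is no $\gamma\in[0,1]$ with $\lambda(\gamma,0)$ and $\lambda(\gamma,1)$ both infinite. The superprediction set of $\lambda$ is $\Sigma_\lambda=\{(x,y)\in[0,\infty)^2:\exists\gamma\in[0,1]\ \lambda(\gamma,0)\le x,\ \lambda(\gamma,1)\le y\}$. For $\eta>0$, $\lambda$ is $\eta$-mixable if the image of $\Sigma_\lambda$ under $(x,y)\mapsto(e^{-\eta x},e^{-\eta y})$ is convex; it is mixable if it is $\eta$-mixable for some $\eta>0$. $\lambda$ is proper (a proper scoring rule) if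 for all $\pi,\pi'\in[0,1]$: $\pi\lambda(\pi,1)+(1-\pi)\lambda(\pi,0)\le\pi\lambda(\pi',1)+(1-\pi)\lambda(\pi',0)$. $\mathcal{L}$ denotes the set of all loss functions that are both mixable and proper. *)

From HB Require Import structures.
From mathcomp Require Import all_boot all_order all_algebra.
From mathcomp Require Import all_classical all_reals all_analysis.
Set Implicit Arguments. Unset Strict Implicit. Unset Printing Implicit Defensive.
Import Order.TTheory GRing.Theory Num.Theory.
Local Open Scope ring_scope.
Local Open Scope classical_set_scope.

(* Outcomes {0,1} are encoded by bool: false = 0, true = 1.
   A (candidate) loss function is a map [0,1] x {0,1} -> [0,oo]; we take it as a
   map R -> bool -> \bar R and only constrain it on [0,1]. *)
Definition lossmap (R : realType) := R -> bool -> \bar R.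

Definition is_loss (R : realType) (lam : lossmap R) : Prop :=
  (forall g b, 0 <= g <= 1 -> (0 <= lam g b)%E) /\
  (forall b, {within `[0, 1], continuous (fun g => lam g b)}) /\
  (exists g, 0 <= g <= 1 /\ lam g false \is a fin_num /\ lam g true \is a fin_num) /\
  ~ (exists g, 0 <= g <= 1 /\ lam g false = +oo%E /\ lam g true = +oo%E).

Definition superpred (R : realType) (lam : lossmap R) : set (R * R) :=
  [set xy | 0 <= xy.1 /\ 0 <= xy.2 /\
     exists g, 0 <= g <= 1 /\ (lam g false <= xy.1%:E)%E /\ (lam g true <= xy.2%:E)%E].

Definition exp_image (R : realType) (eta : R) (A : set (R * R)) : set (R * R) :=
  (fun xy => (expR (- (eta * xy.1)), expR (- (eta * xy.2)))) @` A.

Definition convex_set2 (R : realType) (A : set (R * R)) : Prop :=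
  forall p q a, A p -> A q -> 0 <= a <= 1 ->
    A (a * p.1 + (1 - a) * q.1, a * p.2 + (1 - a) * q.2).

Definition eta_mixable (R : realType) (eta : R) (lam : lossmap R) : Prop :=
  convex_set2 (exp_image eta (superpred lam)).

Definition mixable (R : realType) (lam : lossmap R) : Prop :=
  exists eta : R, 0 < eta /\ eta_mixable eta lam.

(* proper scoring rule (uses the convention 0 * oo = 0 of \bar R) *)
Definition proper (R : realType) (lam : lossmap R) : Prop :=
  forall p p' : R, 0 <= p <= 1 -> 0 <= p' <= 1 ->
    (p%:E * lam p true + (1 - p)%:E * lam p false
     <= p%:E * lam p' true + (1 - p)%:E * lam p' false)%E.

Definition in_L (R : realType) (lam : lossmap R) : Prop :=
  is_loss lam /\ mixable lam /\ proper lam.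

(* a move of one expert: (prediction gamma, eta, loss function) *)
Definition expert_move (R : realType) := (R * R * lossmap R)%type.

Definition experts_move (R : realType) (N : nat) := ('I_N -> expert_move R)%type.

(* A Learner strategy maps the history of previous rounds (experts' moves and
   Reality's outcome, in order) and the current experts' moves to a prediction.
   (Learner's own past predictions are determined by the strategy.) *)
Definition strategy (R : realType) (N : nat) :=
  (seq (experts_move R N * bool) -> experts_move R N -> R)%type.

(* Learner aggregates the experts with weights equal to the exponentials of their
   cumulative eta-weighted regrets, and announces a prediction for which the total
   weight cannot increase, whatever the outcome.  The weights then always sum to at
   most N, so every regret is at most ln N.
   Such a prediction exists.  For an interior prediction p, mixability and
   properness of each loss give p G(p,1) + (1 - p) G(p,0) <= 1 for its weight
   factor G, so the two possible new total weights cannot both exceed the current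
   one.  By properness the prediction 0 (resp. 1) never increases the weight when
   the outcome is 0 (resp. 1).  If neither endpoint is safe, the intermediate value
   theorem yields an interior prediction at which both new total weights agree. *)

From Pilot Require Import Defs.
From HB Require Import structures.
From mathcomp Require Import all_boot all_order all_algebra.
From mathcomp Require Import all_classical all_reals all_analysis.
From mathcomp Require Import ring lra.
Set Implicit Arguments. Unset Strict Implicit. Unset Printing Implicit Defensive.
Import Order.TTheory GRing.Theory Num.Theory.
Import numFieldNormedType.Exports.
Local Open Scope ring_scope.
Local Open Scope classical_set_scope.

Lemma ltW01 (R : realType) (x : R) : 0 < x < 1 -> 0 <= x <= 1.
Proof. by case/andP=> *; rewrite !ltW. Qed.

Lemma boolr01 (R : realType) (b : bool) : 0 <= (b%:R : R) <= 1.
Proof. by case: b; rewrite ?ler01 ?lexx. Qed.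

Lemma le0_of_le_small (R : realFieldType) (d c : R) :
  (forall a, 0 < a -> a <= 1/2 -> d <= a * c) -> d <= 0.
Proof.
move=> small; apply/ler_addgt0Pr => e e_gt0; rewrite add0r.
have c1_gt0 : 0 < `|c| + 1 by rewrite ltr_wpDl.
set a := Order.min (1/2) (e / (`|c| + 1)).
have a_gt0 : 0 < a by rewrite lt_min; apply/andP; split; [lra | exact: divr_gt0].
have a_le : a * (`|c| + 1) <= e by rewrite -ler_pdivlMr // ge_min lexx orbT.
have := small a a_gt0 (ltac:(by rewrite ge_min lexx)).
have := ler_wpM2l (ltW a_gt0) (ler_norm c).
lra.
Qed.

(* The bound 1/4 keeps points found near 0 to the left of points found near 1. *)
Lemma near_within01_interior (R : realType) (g : R) (P : R -> Prop) : 0 <= g <= 1 ->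
  (\forall x \near within `[0, 1] (nbhs g), P x) ->
  exists x, [/\ 0 < x < 1, `|g - x| <= 1/4 & P x].
Proof.
move=> /andP[g_ge0 g_le1] /nbhs_ballP[d d_gt0 near_P].
set r := Order.min d (1/2) / 2.
have [r_gt0 r_lt_d r_le] : [/\ 0 < r, r < d & r <= 1/4].
  have : Order.min d (1/2) <= d /\ Order.min d (1/2) <= 1/2.
    by split; rewrite ge_min lexx ?orbT.
  have : 0 < Order.min d (1/2) by rewrite lt_min d_gt0 /=; lra.
  by rewrite /r; split; lra.
pose x := if g <= 1/2 then g + r else g - r.
have gx : `|g - x| = r.
  rewrite /x; case: ifP => _; last by rewrite opprB addrC subrK gtr0_norm.
  by rewrite opprD addrA subrr add0r normrN gtr0_norm.
exists x; split=> //; [|by rewrite gx|].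
  by rewrite /x; case: (lerP g (1/2)) => g_half; apply/andP; split; lra.
apply: near_P; first by rewrite -ball_normE /ball_ /= gx.
by rewrite /= in_itv /= /x; case: (lerP g (1/2)) => g_half; apply/andP; split; lra.
Qed.

Lemma mix_gain_ge (R : realType) (eta P x y a s : R) : 0 < a -> a <= 1/2 ->
  expR (eta * (P - x)) = 1 + s ->
  expR (- (eta * y)) = a * expR (- (eta * x)) + (1 - a) * expR (- (eta * P)) ->
  a * s - 2 * a ^+ 2 * s ^+ 2 <= eta * (P - y).
Proof.
move=> a_gt0 a_le Es Ey.
have s_gt : -1 < s by have := expR_gt0 (eta * (P - x)); lra.
have Eu : expR (eta * (P - y)) = 1 + a * s.
  rewrite mulrBr expRD Ey mulrDr !(mulrCA (expR _)) -!expRD -!mulrBr Es subrr mulr0 expR0.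
  ring.
set u := eta * (P - y) in Eu *.
have le1 : (1 - u) * (1 + a * s) <= 1.
  rewrite -Eu -[X in _ <= X]expR0 -(addNr u) expRD ler_wpM2r ?(ltW (expR_gt0 _)) //.
  exact: expR_ge1Dx.
have sq_ge0 : 0 <= a ^+ 2 * s ^+ 2 * (1 + 2 * a * s) by apply: mulr_ge0; nra.
rewrite -subr_ge0 -(@pmulr_lge0 _ (1 + a * s)); last by nra.
nra.
Qed.

Lemma eta_mixableP (R : realType) (eta : R) (lam : lossmap R) (x q : R * R) (a : R) :
  eta_mixable eta lam -> superpred lam x -> superpred lam q -> 0 <= a <= 1 ->
  exists2 y, superpred lam y &
    expR (- (eta * y.1)) = a * expR (- (eta * x.1)) + (1 - a) * expR (- (eta * q.1)) /\
    expR (- (eta * y.2)) = a * expR (- (eta * x.2)) + (1 - a) * expR (- (eta * q.2)).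
Proof.
move=> mix xS qS a01.
have [y yS [Ey1 Ey2]] : exp_image eta (superpred lam)
    (a * expR (- (eta * x.1)) + (1 - a) * expR (- (eta * q.1)),
     a * expR (- (eta * x.2)) + (1 - a) * expR (- (eta * q.2))).
  by apply: (mix (_, _) (_, _) a) a01; [exists x | exists q].
by exists y => //; split.
Qed.

Lemma proper_superpred (R : realType) (lam : lossmap R) (p P0 P1 : R) (y : R * R) :
  Defs.proper lam -> 0 <= p <= 1 -> lam p false = P0%:E -> lam p true = P1%:E ->
  superpred lam y -> p * P1 + (1 - p) * P0 <= p * y.2 + (1 - p) * y.1.
Proof.
move=> lam_proper p01 EP0 EP1 [_ [_ [g [g01 [le0 le1]]]]].
rewrite -lee_fin !EFinD !EFinM -EP0 -EP1.
apply: le_trans (lam_proper p g p01 g01) _.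
by apply: leeD; apply: lee_wpmul2l => //; rewrite lee_fin; lra.
Qed.

Lemma mixable_proper_exp_le1 (R : realType) (eta : R) (lam : lossmap R)
    (p P0 P1 : R) (x : R * R) :
  0 < eta -> eta_mixable eta lam -> Defs.proper lam -> 0 <= p <= 1 ->
  lam p false = P0%:E -> lam p true = P1%:E ->
  superpred lam (P0, P1) -> superpred lam x ->
  p * expR (eta * (P1 - x.2)) + (1 - p) * expR (eta * (P0 - x.1)) <= 1.
Proof.
move=> eta_gt0 mix lam_proper p01 EP0 EP1 PS xS.
set s0 := expR (eta * (P0 - x.1)) - 1; set s1 := expR (eta * (P1 - x.2)) - 1.
(* Mixing [x] into [P] with weight [a] lowers the expected loss by about
   [a / eta * (p * s1 + (1 - p) * s0)]; properness forbids any decrease. *)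
suff : p * s1 + (1 - p) * s0 <= 0 by rewrite /s0 /s1; lra.
apply: (@le0_of_le_small _ _ (2 * (s0 ^+ 2 + s1 ^+ 2))) => a a_gt0 a_le.
have a01 : 0 <= a <= 1 by apply/andP; split; lra.
have [y yS [Ey1 Ey2]] := eta_mixableP mix xS PS a01.
have B0 := mix_gain_ge a_gt0 a_le (esym (subrKC 1 _)) Ey1.
have B1 := mix_gain_ge a_gt0 a_le (esym (subrKC 1 _)) Ey2.
rewrite /= -/s0 -/s1 in B0 B1.
have := proper_superpred lam_proper p01 EP0 EP1 yS.
rewrite -subr_ge0 => /(mulr_ge0 (ltW eta_gt0)) regret_le0.
have [p_ge0 q_ge0] : 0 <= p /\ 0 <= 1 - p by lra.
have := ler_wpM2l p_ge0 B1; have := ler_wpM2l q_ge0 B0.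
have : a ^+ 2 * (p * s1 ^+ 2) <= a ^+ 2 * s1 ^+ 2.
  by rewrite ler_wpM2l ?sqr_ge0 // ler_piMl ?sqr_ge0 //; lra.
have : a ^+ 2 * ((1 - p) * s0 ^+ 2) <= a ^+ 2 * s0 ^+ 2.
  by rewrite ler_wpM2l ?sqr_ge0 // ler_piMl ?sqr_ge0 //; lra.
move=> sq0 sq1 avg0 avg1; rewrite -(ler_pM2l a_gt0).
lra.
Qed.

Section ProperLoss.
Variables (R : realType) (lam : lossmap R).
Hypotheses (lam_loss : is_loss lam) (lam_proper : Defs.proper lam).

Lemma loss_ge0 (g : R) (b : bool) : 0 <= g <= 1 -> (0 <= lam g b)%E.
Proof. exact: lam_loss.1. Qed.

Lemma loss_fin_numE (g : R) (b : bool) : 0 <= g <= 1 ->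
  (lam g b \is a fin_num) = (lam g b != +oo%E).
Proof. by move=> g01; rewrite ge0_fin_numE ?ltey ?loss_ge0. Qed.

Lemma loss_cvg_within (g : R) (b : bool) : 0 <= g <= 1 ->
  (fun p => lam p b) @ within `[0, 1] (nbhs g) --> lam g b.
Proof.
by move=> g01; apply/(subspace_continuousP _ _).1; [exact: lam_loss.2.1 | rewrite /= in_itv].
Qed.

Lemma loss_cvg (g : R) (b : bool) : 0 < g < 1 -> (fun p => lam p b) @ g --> lam g b.
Proof.
move=> g01; have g_int : (`[0, 1]%classic : set R)° g by rewrite interior_itv /= in_itv.
by rewrite -(within_interior g_int); apply: loss_cvg_within; exact: ltW01.
Qed.

Lemma proper_certain_le (b : bool) (g : R) : 0 <= g <= 1 -> (lam b%:R b <= lam g b)%E.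
Proof.
move=> g01; have := lam_proper (boolr01 R b) g01.
by case: b; rewrite ?subrr ?subr0 !(mul0e, mul1e, adde0, add0e).
Qed.

Lemma proper_certain_fin_num (b : bool) : lam b%:R b \is a fin_num.
Proof.
have [g [g01 [fin0 fin1]]] := lam_loss.2.2.1.
rewrite loss_fin_numE ?boolr01 // -ltey (le_lt_trans (proper_certain_le b g01)) // ltey.
by rewrite -loss_fin_numE //; case: b.
Qed.

Lemma proper_fin_num (p : R) (b : bool) : 0 < p < 1 -> lam p b \is a fin_num.
Proof.
move=> /andP[p_gt0 p_lt1]; have p01 : 0 <= p <= 1 by rewrite !ltW.
have [g [g01 [fin0 fin1]]] := lam_loss.2.2.1.
have rhs_fin : (p%:E * lam g true + (1 - p)%:E * lam g false)%E \is a fin_num.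
  by rewrite fin_numD !fin_numM.
rewrite loss_fin_numE //; apply/negP => /eqP lam_oo.
have := lam_proper p01 g01.
have : (0 <= p%:E * lam p true)%E /\ (0 <= (1 - p)%:E * lam p false)%E.
  by split; apply: mule_ge0; rewrite ?lee_fin ?loss_ge0 //; lra.
case: b lam_oo => -> [pos1 pos0];
  rewrite gt0_muley ?lte_fin ?subr_gt0 // ?addye ?addey ?gt_eqF ?(lt_le_trans ltNy0) //;
  by rewrite leye_eq => /eqP rhs_oo; rewrite rhs_oo in rhs_fin.
Qed.

Lemma superpred_loss (g : R) : 0 <= g <= 1 ->
  lam g false \is a fin_num -> lam g true \is a fin_num ->
  superpred lam (fine (lam g false), fine (lam g true)).
Proof.
move=> g01 fin0 fin1; split; [|split]; rewrite /= ?fine_ge0 ?loss_ge0 //.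
by exists g; rewrite !fineK.
Qed.
End ProperLoss.

Section MixableProperLoss.
Variables (R : realType) (eta : R) (lam : lossmap R).
Hypotheses (lam_loss : is_loss lam) (lam_proper : Defs.proper lam).
Hypotheses (eta_gt0 : 0 < eta) (lam_mix : eta_mixable eta lam).

Lemma exp_gain_le1 (p g : R) : 0 < p < 1 -> 0 <= g <= 1 ->
  lam g false \is a fin_num -> lam g true \is a fin_num ->
  p * expR (eta * (fine (lam p true) - fine (lam g true))) +
  (1 - p) * expR (eta * (fine (lam p false) - fine (lam g false))) <= 1.
Proof.
move=> p01 g01 fin0 fin1.
have [fin_p0 fin_p1] := (proper_fin_num lam_loss lam_proper false p01,
                         proper_fin_num lam_loss lam_proper true p01).
have p01' := ltW01 p01.
exact: (mixable_proper_exp_le1 eta_gt0 lam_mix lam_proper p01'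
  (esym (fineK fin_p0)) (esym (fineK fin_p1))
  (superpred_loss lam_loss p01' fin_p0 fin_p1) (superpred_loss lam_loss g01 fin0 fin1)).
Qed.

(* Approximating [g] by interior points, where both losses are finite, covers
   experts whose loss on the other outcome is infinite. *)
Lemma exp_gain_le1_at (p g : R) (b : bool) : 0 < p < 1 -> 0 <= g <= 1 ->
  lam g b \is a fin_num ->
  (if b then p else 1 - p) * expR (eta * (fine (lam p b) - fine (lam g b))) <= 1.
Proof.
move=> p01 g01 fin_g; apply/ler_addgt0Pr => d d_gt0.
set z := 1 + d; have z_gt0 : 0 < z by rewrite addr_gt0.
set C := fine (lam g b); set e := ln z / eta.
have e_gt0 : 0 < e by rewrite divr_gt0 // ln_gt0 // ltrDl.
have := loss_cvg_within lam_loss (b := b) g01; rewrite -(fineK fin_g) => /fine_cvgP[_].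
move=> /cvgr_lt /(_ (C + e)); rewrite ltrDl => /(_ e_gt0) near_lt.
have [x [x01 _ /= lt_x]] := near_within01_interior g01 near_lt.
set coef := if b then p else 1 - p.
set A := expR (eta * (fine (lam p b) - fine (lam x b))).
have coefA_le1 : coef * A <= 1.
  have := exp_gain_le1 p01 (ltW01 x01) (proper_fin_num lam_loss lam_proper false x01)
                                       (proper_fin_num lam_loss lam_proper true x01).
  have [p_ge0 q_ge0] : 0 <= p /\ 0 <= 1 - p by case/andP: p01 => *; split; lra.
  rewrite /coef /A; case: (b) => /= gain_le1; apply: le_trans gain_le1.
    by rewrite lerDl mulr_ge0 // ltW // expR_gt0.
  by rewrite lerDr mulr_ge0 // ltW // expR_gt0.
have le_A : expR (eta * (fine (lam p b) - C)) <= A * z.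
  rewrite -[X in _ <= _ * X](lnK z_gt0) -expRD ler_expR.
  have -> : ln z = eta * e by rewrite /e mulrC divfK ?gt_eqF.
  by rewrite -mulrDr ler_pM2l //; lra.
have coef_ge0 : 0 <= coef by rewrite /coef; case: (b); case/andP: p01 => *; lra.
apply: le_trans (ler_wpM2l coef_ge0 le_A) _.
by rewrite mulrA -[X in _ <= X]mul1r ler_wpM2r // ltW.
Qed.
End MixableProperLoss.

(* An expert whose own loss is infinite gets factor 0, matching its regret -oo.
   [fine] would turn an infinite loss of Learner into 0; [safe_for] rules this out
   for every expert that still has positive weight. *)
Definition reweight (R : realType) (mv : expert_move R) (p : R) (b : bool) : R :=
  if mv.2 mv.1.1 b == +oo%E then 0
  else expR (mv.1.2 * (fine (mv.2 p b) - fine (mv.2 mv.1.1 b))).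

Definition admissible (R : realType) (mv : expert_move R) : Prop :=
  [/\ 0 <= mv.1.1 <= 1, 0 < mv.1.2, is_loss mv.2, Defs.proper mv.2 &
      eta_mixable mv.1.2 mv.2].

Section Reweight.
Variables (R : realType) (mv : expert_move R).

Lemma reweight_ge0 (p : R) (b : bool) : 0 <= reweight mv p b.
Proof. by rewrite /reweight; case: ifP => // _; exact: ltW (expR_gt0 _). Qed.

Lemma reweight_cvg (e : R) (b : bool) (F : set_system R) {FF : Filter F} :
  mv.2 e b \is a fin_num \/ mv.2 mv.1.1 b = +oo%E ->
  (fun x => mv.2 x b) @ F --> mv.2 e b ->
  (fun x => reweight mv x b) @ F --> reweight mv e b.
Proof.
rewrite /reweight; case: eqP => [_ _ _ | /eqP g_fin [e_fin | //]]; first exact: cvg_cst.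
rewrite -(fineK e_fin) => /fine_cvgP[_ cvg_fine].
apply: continuous_cvg; first exact: continuous_expR.
by apply: cvgM; [exact: cvg_cst | apply: cvgB; [exact: cvg_fine | exact: cvg_cst]].
Qed.

Hypothesis mv_adm : admissible mv.

Lemma reweight_certain_le1 (b : bool) : reweight mv b%:R b <= 1.
Proof.
case: mv mv_adm => [[g eta] lam] [/= g01 eta_gt0 lam_loss lam_proper _].
rewrite /reweight /=; case: eqP => [_|/eqP g_fin]; first exact: ler01.
have [p_fin le_g] := (proper_certain_fin_num lam_loss lam_proper b,
                      proper_certain_le lam_proper b g01).
rewrite -[X in _ <= X]expR0 ler_expR pmulr_rle0 // subr_le0 fine_le //.
by rewrite loss_fin_numE.
Qed.

Lemma reweight_mix_le1 (p : R) : 0 < p < 1 ->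
  p * reweight mv p true + (1 - p) * reweight mv p false <= 1.
Proof.
case: mv mv_adm => [[g eta] lam] [/= g01 eta_gt0 lam_loss lam_proper lam_mix] p01.
have fin_g b : lam g b != +oo%E -> lam g b \is a fin_num by rewrite loss_fin_numE.
rewrite /reweight /=.
case: eqP => [g1_oo|/eqP /fin_g g1_fin]; case: eqP => [g0_oo|/eqP /fin_g g0_fin].
- by case: lam_loss.2.2.2; exists g.
- by rewrite mulr0 add0r; exact: (exp_gain_le1_at _ _ eta_gt0 _ (b := false) p01 g01 g0_fin).
- by rewrite mulr0 addr0; exact: (exp_gain_le1_at _ _ eta_gt0 _ (b := true) p01 g01 g1_fin).
- exact: exp_gain_le1.
Qed.

Lemma reweight_unbounded (e : R) (b : bool) (A : R) : 0 <= e <= 1 ->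
  mv.2 mv.1.1 b != +oo%E -> mv.2 e b = +oo%E ->
  \forall x \near within `[0, 1] (nbhs e), 0 < x < 1 -> A < reweight mv x b.
Proof.
case: mv mv_adm => [[g eta] lam] [/= g01 eta_gt0 lam_loss lam_proper _] e01 g_fin e_oo.
have := loss_cvg_within lam_loss (b := b) e01; rewrite e_oo => /cvgeyPgt.
move=> /(_ (fine (lam g b) + A / eta)); apply: filterS => x lt_x x01.
rewrite /reweight /= (negbTE g_fin).
have x_fin := proper_fin_num lam_loss lam_proper b x01.
rewrite -(fineK x_fin) lte_fin in lt_x.
have lt_A : A < eta * (fine (lam x b) - fine (lam g b)).
  by rewrite -[A](divfK (lt0r_neq0 eta_gt0)) mulrC ltr_pM2l //; lra.
by apply: lt_le_trans (expR_ge1Dx _); lra.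
Qed.
End Reweight.

Lemma lne_reweight (R : realType) (mv : expert_move R) (v p : R) (b : bool) :
  admissible mv -> 0 <= p <= 1 -> 0 <= v ->
  (0 < v -> mv.2 mv.1.1 b != +oo%E -> mv.2 p b != +oo%E) ->
  lne (v * reweight mv p b)%:E = (lne v%:E + mv.1.2%:E * (mv.2 p b - mv.2 mv.1.1 b))%E.
Proof.
case: mv => [[g eta] lam] [/= g01 eta_gt0 lam_loss _ _] p01 v_ge0 keep_fin.
have [v_gt0 | v_le0] := ltrP 0 v; last first.
  by rewrite (@le_anti _ _ v 0) ?v_le0 ?v_ge0 // mul0r lexx.
rewrite /reweight /=; case: eqP => [g_oo | /eqP g_fin].
  by rewrite mulr0 lexx g_oo addeNy gt0_muleNy ?lte_fin // addeNy.
have [p_fin g_fin'] : lam p b \is a fin_num /\ lam g b \is a fin_num.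
  by rewrite !loss_fin_numE // g_fin keep_fin.
rewrite leNgt mulr_gt0 ?expR_gt0 //= lnM ?posrE ?expR_gt0 // expRK.
by rewrite -(fineK p_fin) -(fineK g_fin') -EFinB -EFinM -EFinD.
Qed.

Section Aggregation.
Variables (R : realType) (N : nat) (w : 'I_N -> R) (m : experts_move R N).

Definition mass (p : R) (b : bool) : R := \sum_(n < N) w n * reweight (m n) p b.

Definition safe_for (p : R) (b : bool) : Prop :=
  mass p b <= \sum_(n < N) w n /\
  forall n, 0 < w n -> (m n).2 (m n).1.1 b != +oo%E -> (m n).2 p b != +oo%E.

Definition safe (p : R) : Prop := 0 <= p <= 1 /\ forall b, safe_for p b.

Hypotheses (m_adm : forall n, admissible (m n)) (w_ge0 : forall n, 0 <= w n).

Let W := \sum_(n < N) w n.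

Lemma mass_mix_le (p : R) : 0 < p < 1 -> p * mass p true + (1 - p) * mass p false <= W.
Proof.
move=> p01; rewrite /mass !mulr_sumr -big_split ler_sum // => n _ /=.
rewrite mulrCA [(1 - p) * _]mulrCA -mulrDr -[X in _ <= X]mulr1.
by rewrite ler_wpM2l // reweight_mix_le1.
Qed.

Lemma mass_cvg (e : R) (b : bool) (F : set_system R) {FF : Filter F} :
  (forall n, 0 < w n -> (m n).2 e b \is a fin_num \/ (m n).2 (m n).1.1 b = +oo%E) ->
  (forall n, 0 < w n -> (fun x => (m n).2 x b) @ F --> (m n).2 e b) ->
  (fun p => mass p b) @ F --> mass e b.
Proof.
move=> fin_e cvg_e; apply: cvg_big; first exact: add_continuous.
move=> n _; have [w_gt0|w_le0] := ltrP 0 (w n).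
  by apply: cvgM; [exact: cvg_cst | apply: reweight_cvg; [exact: fin_e | exact: cvg_e]].
have -> : w n = 0 by apply/eqP; rewrite eq_le w_le0 w_ge0.
under eq_fun do rewrite mul0r.
by rewrite mul0r; exact: cvg_cst.
Qed.

Lemma mass_cvg_interior (p : R) (b : bool) : 0 < p < 1 -> (fun x => mass x b) @ p --> mass p b.
Proof.
move=> p01; apply: mass_cvg => n _; have [_ _ lam_loss lam_proper _] := m_adm n.
  by left; exact: proper_fin_num.
exact: loss_cvg.
Qed.

Lemma safe_for_certain (b : bool) : safe_for b%:R b.
Proof.
split=> [|n _ _]; last first.
  have [_ _ lam_loss lam_proper _] := m_adm n.
  by rewrite -loss_fin_numE ?proper_certain_fin_num ?boolr01.
rewrite /mass ler_sum // => n _; rewrite -[X in _ <= X]mulr1 ler_wpM2l //.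
exact: reweight_certain_le1.
Qed.

Lemma mass_gt_near (e : R) (b : bool) : 0 <= e <= 1 -> ~ safe_for e b ->
  exists x, [/\ 0 < x < 1, `|e - x| <= 1/4 & W < mass x b].
Proof.
move=> e01 unsafe.
have mass_ge (n : 'I_N) x : w n * reweight (m n) x b <= mass x b.
  rewrite /mass (bigD1 n) //= lerDl sumr_ge0 // => k _.
  by rewrite mulr_ge0 ?reweight_ge0.
have [[n [w_gt0 g_fin e_oo]] | no_blowup] :=
  pselect (exists n, [/\ 0 < w n, (m n).2 (m n).1.1 b != +oo%E & (m n).2 e b = +oo%E]).
  have [x [x01 xe gt_x]] := near_within01_interior e01
    (reweight_unbounded (m_adm n) (W / w n) e01 g_fin e_oo).
  exists x; split=> //; apply: lt_le_trans (mass_ge n x).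
  by rewrite -ltr_pdivrMl // mulrC gt_x.
have mass_gt : W < mass e b.
  rewrite ltNge; apply/negP => mass_le; apply: unsafe; split=> // n w_gt0 g_fin.
  by apply/negP => /eqP e_oo; apply: no_blowup; exists n.
have cvg_e : (fun x => mass x b) @ within `[0, 1] (nbhs e) --> mass e b.
  apply: mass_cvg => n w_gt0; have [_ _ lam_loss _ _] := m_adm n; last exact: loss_cvg_within.
  have [g_oo | g_fin] := eqVneq ((m n).2 (m n).1.1 b) +oo%E; [by right | left].
  rewrite loss_fin_numE //; apply/negP => /eqP e_oo; apply: no_blowup; by exists n.
exact: near_within01_interior e01 (cvgr_gt _ cvg_e W mass_gt).
Qed.

Lemma safe_interior (p : R) : 0 < p < 1 -> mass p true <= W -> mass p false <= W -> safe p.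
Proof.
move=> p01 le1 le0; split=> [|b]; first exact: ltW01.
split=> [|n _ _]; first by case: b.
have [_ _ lam_loss lam_proper _] := m_adm n.
by rewrite -loss_fin_numE ?ltW01 // proper_fin_num.
Qed.

Lemma safe_between (a c : R) : 0 < a -> a <= c -> c < 1 ->
  W < mass a true -> W < mass c false -> exists p, safe p.
Proof.
move=> a_gt0 ac c_lt1 gt_a gt_c.
have [a01 c01] : 0 < a < 1 /\ 0 < c < 1 by split; apply/andP; split; lra.
pose h x := mass x true - mass x false.
have h_a : 0 < h a by have := mass_mix_le a01; rewrite /h subr_gt0; nra.
have h_c : h c < 0 by have := mass_mix_le c01; rewrite /h subr_lt0; nra.
have h_cont : {within `[a, c], continuous h}.
  apply: continuous_in_subspaceT => x; rewrite inE /= in_itv /= => /andP[ax xc].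
  have x01 : 0 < x < 1 by apply/andP; split; lra.
  by apply: cvgB; exact: mass_cvg_interior.
have [|p] := IVT ac h_cont (v := 0).
  by rewrite ge_min le_max !(ltW h_a) !(ltW h_c) orbT.
rewrite in_itv /= => /andP[ap pc] /eqP; rewrite subr_eq0 => /eqP mass_eq.
have p01 : 0 < p < 1 by apply/andP; split; lra.
have := mass_mix_le p01; rewrite mass_eq => le_W.
by exists p; apply: safe_interior; rewrite ?mass_eq; lra.
Qed.

Lemma safe_exists : exists p, safe p.
Proof.
have [zero01 one01] : 0 <= (0 : R) <= 1 /\ 0 <= (1 : R) <= 1 by rewrite !lexx ler01.
have [safe0 | unsafe0] := pselect (safe_for 0 true).
  by exists 0; split=> // -[] //; exact: (safe_for_certain false).
have [safe1 | unsafe1] := pselect (safe_for 1 false).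
  by exists 1; split=> // -[] //; exact: (safe_for_certain true).
have [a [a01 a_near gt_a]] := mass_gt_near zero01 unsafe0.
have [c [c01 c_near gt_c]] := mass_gt_near one01 unsafe1.
rewrite sub0r normrN gtr0_norm ?(andP a01).1 // in a_near.
rewrite gtr0_norm ?subr_gt0 ?(andP c01).2 // in c_near.
by apply: (safe_between _ _ _ gt_a gt_c); case/andP: a01; case/andP: c01; lra.
Qed.
End Aggregation.

Section Learner.
Variables (R : realType) (N : nat).

Definition learner_pred (w : 'I_N -> R) (m : experts_move R N) : R := xget 0 (safe w m).

Lemma learner_pred01 (w : 'I_N -> R) (m : experts_move R N) : 0 <= learner_pred w m <= 1.
Proof.
rewrite /learner_pred; case: xgetP => [p _ [] // | _]; by rewrite lexx ler01.
Qed.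

Lemma learner_pred_safe (w : 'I_N -> R) (m : experts_move R N) :
  (forall n, admissible (m n)) -> (forall n, 0 <= w n) -> safe w m (learner_pred w m).
Proof. by move=> m_adm w_ge0; apply: xgetPex; exact: safe_exists. Qed.

Definition update_weights (w : 'I_N -> R) (round : experts_move R N * bool) : 'I_N -> R :=
  fun n => w n * reweight (round.1 n) (learner_pred w round.1) round.2.

Definition learner_weights (h : seq (experts_move R N * bool)) : 'I_N -> R :=
  foldl update_weights (fun=> 1) h.

Definition learner : strategy R N := fun h m => learner_pred (learner_weights h) m.

End Learner.

Section Play.
Variables (R : realType) (N : nat) (mv : nat -> experts_move R N) (om : nat -> bool).
Hypothesis mv_adm : forall t n, admissible (mv t n).

Let history t := [seq (mv s, om s) | s <- iota 0 t].
Let w t := learner_weights (history t).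
Let pi t := learner (history t) (mv t).

Lemma learner_weightsS t n : w t.+1 n = w t n * reweight (mv t n) (pi t) (om t).
Proof. by rewrite /w /history -addn1 iotaD map_cat /learner_weights foldl_cat. Qed.

Lemma learner_weights_bound t : (forall n, 0 <= w t n) /\ \sum_(n < N) w t n <= N%:R.
Proof.
elim: t => [|t [w_ge0 w_sum]]; first by split=> [n|]; rewrite /w /= ?ler01 // sumr_const card_ord.
have [_ safe_pi] := learner_pred_safe (mv_adm t) w_ge0.
split=> [n|]; first by rewrite learner_weightsS mulr_ge0 ?reweight_ge0.
under eq_bigr do rewrite learner_weightsS.
exact: le_trans (safe_pi (om t)).1 w_sum.
Qed.

Lemma regret_lne t n :
  (\sum_(0 <= s < t) ((mv s n).1.2)%:E * ((mv s n).2 (pi s) (om s) - (mv s n).2 (mv s n).1.1 (om s))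
   = lne (w t n)%:E)%E.
Proof.
elim: t => [|t IH]; first by rewrite big_geq // (_ : w 0 n = 1) // lne1.
have [w_ge0 _] := learner_weights_bound t.
have [_ safe_pi] := learner_pred_safe (mv_adm t) w_ge0.
rewrite big_nat_recr // IH learner_weightsS.
by rewrite (lne_reweight (mv_adm t n) (learner_pred01 _ _) (w_ge0 n) ((safe_pi (om t)).2 n)).
Qed.
End Play.

Theorem theorem2 (R : realType) (N : nat) :
  exists S : strategy R N,
    (forall h m, 0 <= S h m <= 1) /\
    forall (gam eta : nat -> 'I_N -> R) (lam : nat -> 'I_N -> lossmap R)
           (om : nat -> bool),
      (forall t n, 0 <= gam t n <= 1) ->
      (forall t n, 0 < eta t n) ->
      (forall t n, in_L (lam t n)) ->
      (forall t n, eta_mixable (eta t n) (lam t n)) ->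
      let mv : nat -> experts_move R N :=
        fun t n => (gam t n, eta t n, lam t n) in
      let pi : nat -> R :=
        fun t => S [seq (mv s, om s) | s <- iota 0 t] (mv t) in
      forall (T : nat) (n : 'I_N), (0 < T)%N ->
        (\sum_(0 <= t < T)
            ((eta t n)%:E * (lam t n (pi t) (om t) - lam t n (gam t n) (om t)))
         <= (ln N%:R)%:E)%E.
Proof.
exists (@learner R N); split=> [h m|]; first exact: learner_pred01.
move=> gam eta lam om gam01 eta_gt0 lam_L lam_mix mv pi T n _.
have mv_adm t k : admissible (mv t k).
  have [lam_loss [_ lam_proper]] := lam_L t k.
  by split=> //; [exact: gam01 | exact: eta_gt0 | exact: lam_mix].
rewrite (regret_lne om mv_adm).
have [w_ge0 w_sum] := learner_weights_bound om mv_adm T.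
have N_gt0 : (0 < N)%N := leq_ltn_trans (leq0n n) (ltn_ord n).
rewrite -lne_EFin ?ltr0n // lee_lne ?in_itv /= ?lee_fin ?leey ?ler0n ?w_ge0 //.
by apply: le_trans w_sum; rewrite (bigD1 n) //= lerDl sumr_ge0.
Qed.
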